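(* Let $\mathcal{M}\subseteq\mathbb{S}^n$. If $\mathcal{S}(\mathcal{M})$ is rank-one generated, then for all $B\in\mathbb{S}^n$, $$\mathrm{conv}\left(\{X\in\mathbb{S}^n:\ \langle M,X\rangle\ge0\ \forall M\in\mathcal{M},\ \langle B,X\rangle=1,\ X\succeq0,\ \mathrm{rank}(X)\le2\}\right)=\{X\in\mathbb{S}^n:\ \langle M,X\rangle\ge0\ \forall M\in\mathcal{M},\ \langle B,X\rangle=1,\ X\succeq0\}.$$ In particular, when $\mathcal{S}(\mathcal{M})$ is rank-one generated and $\mathcal{M}=\{M_1,\dots,M_m\}$, for any $M_0\in\mathbb{S}^n$ there exists a sequence of rank-two feasible solutions approaching the optimal value of $\inf\{\langle M_0,X\rangle: X\succeq0,\ \langle M_i,X\rangle\ge0\ \forall i\in\{1,\dots,m\},\ X_{1,1}=1\}$.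
   Context: $\mathbb{S}^n$ denotes real symmetric $n\times n$ matrices with $\langle A,B\rangle=\mathrm{tr}(AB)$, $\mathbb{S}^n_+$ the PSD cone, $X\succeq0$ means $X$ is PSD. For $\mathcal{M}\subseteq\mathbb{S}^n$, $\mathcal{S}(\mathcal{M})=\{X\in\mathbb{S}^n_+:\langle M,X\rangle\ge0\ \forall M\in\mathcal{M}\}$. A closed convex cone $\mathcal{S}\subseteq\mathbb{S}^n_+$ is rank-one generated (ROG) if $\mathcal{S}=\mathrm{conv}(\mathcal{S}\cap\{xx^\top:x\in\mathbb{R}^n\})$. *)

From HB Require Import structures.
From mathcomp Require Import all_boot all_order all_algebra.
From mathcomp Require Import all_classical all_reals all_analysis.
Set Implicit Arguments. Unset Strict Implicit. Unset Printing Implicit Defensive.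
Import Order.TTheory GRing.Theory Num.Theory.
Local Open Scope classical_set_scope.
Local Open Scope ring_scope.

Section Defs.
Variable R : realType.

Definition symmx n (X : 'M[R]_n) : Prop := X^T = X.

Definition psdmx n (X : 'M[R]_n) : Prop :=
  symmx X /\ forall v : 'cV[R]_n, 0 <= (v^T *m X *m v) 0 0.

Definition inner n (A B : 'M[R]_n) : R := \tr (A *m B).

Definition SM n (Ms : set 'M[R]_n) : set 'M[R]_n :=
  [set X | psdmx X /\ forall M, Ms M -> 0 <= inner M X].

Definition mconv n (S : set 'M[R]_n) : set 'M[R]_n :=
  [set X | exists (k : nat) (l : 'I_k -> R) (Y : 'I_k -> 'M[R]_n),
      (forall i, S (Y i)) /\ (forall i, 0 <= l i) /\
      \sum_(i < k) l i = 1 /\ X = \sum_(i < k) l i *: Y i].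

Definition rank_one_set n : set 'M[R]_n := [set X | exists x : 'cV[R]_n, X = x *m x^T].

Definition ROG n (S : set 'M[R]_n) : Prop := S = mconv (S `&` @rank_one_set n).

End Defs.

From HB Require Import structures.
From mathcomp Require Import all_boot all_order all_algebra.
From mathcomp Require Import all_classical all_reals all_analysis.
From mathcomp Require Import ring lra.
Set Implicit Arguments. Unset Strict Implicit. Unset Printing Implicit Defensive.
Import Order.TTheory GRing.Theory Num.Theory.
Local Open Scope classical_set_scope.
Local Open Scope ring_scope.

(* By rank-one generation, every X of the slice {X in S(M) : <B,X> = 1} is a
   finite sum of rank-one elements of S(M).  Two summands x, y on which <B,.>
   has the same sign can be merged: x + y + r is a convex combination of
   x/t + r and y/(1-t) + r, where t is chosen so that <B,x/t> = <B,y/(1-t)>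
   = <B,x+y>, and both lie on the slice with one summand fewer.  What remains
   is x + y + z with <B,y> <= 0 = <B,z>, hence <B,x> >= 1, and this is the
   midpoint of the two rank-two points of the slice
   (x/<B,x> + 2z) and ((2 - 1/<B,x>) x + 2y).
   For the second statement, a linear function has the same infimum on the
   slice as on its rank-two points, since the slice is their convex hull. *)

Section Inner.
Variables (R : realType) (n : nat).
Implicit Types (B X Y : 'M[R]_n).

Lemma innerD B X Y : inner B (X + Y) = inner B X + inner B Y.
Proof. by rewrite /inner mulmxDr mxtraceD. Qed.

Lemma innerZ B c X : inner B (c *: X) = c * inner B X.
Proof. by rewrite /inner -scalemxAr mxtraceZ. Qed.

Lemma inner0 B : inner B 0 = 0.
Proof. by rewrite /inner mulmx0 mxtrace0. Qed.

Lemma inner_sum B (I : Type) (r : seq I) (P : pred I) (F : I -> 'M[R]_n) :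
  inner B (\sum_(i <- r | P i) F i) = \sum_(i <- r | P i) inner B (F i).
Proof. exact: (big_morph _ (innerD B) (inner0 B)). Qed.

Lemma inner_delta (i : 'I_n) X : inner (delta_mx i i) X = X i i.
Proof.
rewrite /inner /mxtrace (bigD1 i) //= big1 ?addr0.
  rewrite mxE (bigD1 i) //= big1 ?addr0; first by rewrite mxE !eqxx mul1r.
  by move=> j ji; rewrite mxE (negbTE ji) andbF mul0r.
by move=> j ji; rewrite mxE big1 // => k _; rewrite mxE (negbTE ji) andFb mul0r.
Qed.

End Inner.

Lemma split_lshift m k (j : 'I_m) : fintype.split (lshift k j) = inl j.
Proof. exact: (unsplitK (inl j)). Qed.

Lemma split_rshift m k (j : 'I_k) : fintype.split (rshift m j) = inr j.
Proof. exact: (unsplitK (inr j)). Qed.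

Section ConvexHull.
Variables (R : realType) (n : nat).
Implicit Types (S : set 'M[R]_n) (X Y : 'M[R]_n).

Lemma mconv_sub S : S `<=` mconv S.
Proof.
move=> X SX; exists 1%N, (fun=> 1), (fun=> X); split => //; split => //.
by rewrite !big_ord1 scale1r.
Qed.

Lemma mconv_mono S1 S2 : S1 `<=` S2 -> mconv S1 `<=` mconv S2.
Proof.
move=> S12 X [k [l [Y [SY [l_ge0 [l1 ->]]]]]].
by exists k, l, Y; split => // i; apply: S12.
Qed.

Lemma mconv_nonempty S X : mconv S X -> S !=set0.
Proof.
case=> [[|k] [l [Y [SY [_ [l1 _]]]]]]; last by exists (Y ord0).
by move: l1; rewrite big_ord0 => /eqP; rewrite eq_sym oner_eq0.
Qed.

Lemma mconv_convex S X Y (t : R) : 0 <= t <= 1 ->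
  mconv S X -> mconv S Y -> mconv S (t *: X + (1 - t) *: Y).
Proof.
move=> /andP[t_ge0 t_le1] [k1 [l1 [Y1 [SY1 [l1_ge0 [l1_1 ->]]]]]]
  [k2 [l2 [Y2 [SY2 [l2_ge0 [l2_1 ->]]]]]].
exists (k1 + k2)%N,
  (fun i => match fintype.split i with inl j => t * l1 j | inr j => (1 - t) * l2 j end),
  (fun i => match fintype.split i with inl j => Y1 j | inr j => Y2 j end).
split; [|split; [|split]].
- by move=> i; case: fintype.split.
- by move=> i; case: fintype.split => j; rewrite mulr_ge0 ?subr_ge0.
- rewrite big_split_ord /=.
  transitivity (t * \sum_(j < k1) l1 j + (1 - t) * \sum_(j < k2) l2 j); last first.
    by rewrite l1_1 l2_1 !mulr1 addrCA subrr addr0.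
  by rewrite !mulr_sumr; congr (_ + _); apply: eq_bigr => j _;
    rewrite ?split_lshift ?split_rshift.
- rewrite big_split_ord /= !scaler_sumr.
  by congr (_ + _); apply: eq_bigr => j _;
    rewrite ?split_lshift ?split_rshift scalerA.
Qed.

Lemma mconv_split_sum S x y r (t : R) : 0 < t < 1 ->
  mconv S (t^-1 *: x + r) -> mconv S ((1 - t)^-1 *: y + r) -> mconv S (x + y + r).
Proof.
move=> /andP[t_gt0 t_lt1] Sx Sy.
have -> : x + y + r = t *: (t^-1 *: x + r) + (1 - t) *: ((1 - t)^-1 *: y + r).
  rewrite !scalerDr !scalerA !divff ?scale1r ?subr_eq0 ?gt_eqF //.
  by rewrite addrACA -scalerDl addrCA subrr addr0 scale1r.
by apply: mconv_convex => //; rewrite !ltW.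
Qed.

End ConvexHull.

Lemma filter_two_perm (T : eqType) (P : pred T) (s : seq T) :
  (1 < size [seq a <- s | P a])%N ->
  exists x y r, perm_eq s [:: x, y & r] /\ P x /\ P y.
Proof.
case Es: [seq a <- s | P a] => [|x [|y r]] // _.
have Px : x \in [seq a <- s | P a] by rewrite Es mem_head.
have Py : y \in [seq a <- s | P a] by rewrite Es !inE eqxx orbT.
exists x, y, (r ++ [seq a <- s | predC P a]); split.
  by rewrite perm_sym -cat_cons -cat_cons -Es perm_filterC.
by move: Px Py; rewrite !mem_filter => /andP[-> _] /andP[-> _].
Qed.

Lemma sum_size_le1 (V : zmodType) (P : set V) (s : seq V) :
  P 0 -> (size s <= 1)%N -> (forall a, a \in s -> P a) -> P (\sum_(a <- s) a).
Proof.
case: s => [|a [|]] // P0 _ Ps; first by rewrite big_nil.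
by rewrite big_seq1; apply: Ps; rewrite mem_head.
Qed.

Lemma same_sign_split (R : realFieldType) (a b : R) : Num.sg a = Num.sg b ->
  exists2 t, 0 < t < 1 & a = t * (a + b) /\ b = (1 - t) * (a + b).
Proof.
wlog a_ge0 : a b / 0 <= a.
  move=> W sg_ab; have [a_ge0|a_lt0] := leP 0 a; first exact: W.
  have sg_Nab : Num.sg (- a) = Num.sg (- b) by rewrite !sgrN sg_ab.
  have Na_ge0 : 0 <= - a by rewrite oppr_ge0 ltW.
  have [t t01 [ea eb]] := W (- a) (- b) Na_ge0 sg_Nab.
  by exists t => //; split; nra.
move=> sg_ab; have [a0|a_neq0] := eqVneq a 0.
  move: sg_ab; rewrite a0 sgr0 => /esym/eqP; rewrite sgr_eq0 => /eqP ->.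
  by exists 2^-1; [apply/andP; split; lra | rewrite addr0 !mulr0].
have a_gt0 : 0 < a by rewrite lt_def a_neq0 a_ge0.
move: sg_ab; rewrite gtr0_sg // => /esym/eqP; rewrite sgr_cp0 => b_gt0.
have ab_gt0 : 0 < a + b by rewrite addr_gt0.
exists (a / (a + b)); last by split; field; rewrite gt_eqF.
by apply/andP; split; [exact: divr_gt0 | rewrite ltr_pdivrMr // mul1r ltrDl].
Qed.

Lemma sum_by_sign (R : realDomainType) (V : zmodType) (f : V -> R) (s : seq V) :
  \sum_(a <- s) a = \sum_(a <- [seq a <- s | Num.sg (f a) == 1]) a
    + \sum_(a <- [seq a <- s | Num.sg (f a) == -1]) a
    + \sum_(a <- [seq a <- s | Num.sg (f a) == 0]) a.
Proof.
rewrite !big_filter (bigID (fun a => Num.sg (f a) == 1)) -addrA /=.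
congr (_ + _); rewrite (bigID (fun a => Num.sg (f a) == -1)) /=.
by congr (_ + _); apply: eq_bigl => a; rewrite !sgr_cp0; case: ltrgt0P.
Qed.

Section Cone.
Variables (R : realType) (n : nat).
Implicit Types (Ms : set 'M[R]_n) (X Y : 'M[R]_n).

Lemma psdmx0 : psdmx (0 : 'M[R]_n).
Proof.
split; first by rewrite /symmx trmx0.
by move=> v; rewrite mulmx0 mul0mx mxE.
Qed.

Lemma psdmxD X Y : psdmx X -> psdmx Y -> psdmx (X + Y).
Proof.
move=> [sX qX] [sY qY]; split; first by rewrite /symmx linearD /= sX sY.
by move=> v; rewrite mulmxDr mulmxDl mxE addr_ge0.
Qed.

Lemma psdmxZ c X : 0 <= c -> psdmx X -> psdmx (c *: X).
Proof.
move=> c_ge0 [sX qX]; split; first by rewrite /symmx linearZ /= sX.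
by move=> v; rewrite -scalemxAr -scalemxAl mxE mulr_ge0.
Qed.

Lemma SM0 Ms : SM Ms 0.
Proof. by split=> [|M _]; [exact: psdmx0 | rewrite inner0]. Qed.

Lemma SMZ Ms c X : 0 <= c -> SM Ms X -> SM Ms (c *: X).
Proof.
move=> c_ge0 [pX MX]; split; first exact: psdmxZ.
by move=> M MsM; rewrite innerZ mulr_ge0 ?MX.
Qed.

Lemma rank_one_set0 : rank_one_set (0 : 'M[R]_n).
Proof. by exists 0; rewrite mul0mx. Qed.

Lemma rank_one_setZ c X : 0 <= c -> rank_one_set X -> rank_one_set (c *: X).
Proof.
move=> c_ge0 [x ->]; exists (Num.sqrt c *: x).
by rewrite linearZ /= -scalemxAl -scalemxAr scalerA -expr2 sqr_sqrtr.
Qed.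

Lemma rank_one_set_rank X : rank_one_set X -> (\rank X <= 1)%N.
Proof. by move=> [x ->]; apply: leq_trans (mxrankM_maxl _ _) (rank_leq_col _). Qed.

End Cone.

Section Slice.
Variables (R : realType) (n : nat) (Ms : set 'M[R]_n) (B : 'M[R]_n).
Implicit Types (X : 'M[R]_n) (s : seq 'M[R]_n).

Definition rank_one_SM := SM Ms `&` @rank_one_set R n.

Definition slice := [set X | (forall M, Ms M -> 0 <= inner M X) /\
  inner B X = 1 /\ psdmx X].

Definition slice_rank_le r := [set X | (forall M, Ms M -> 0 <= inner M X) /\
  inner B X = 1 /\ psdmx X /\ (\rank X <= r)%N].

Definition pair_sums := [set X | exists a b,
  rank_one_SM a /\ rank_one_SM b /\ inner B (a + b) = 1 /\ X = a + b].

Lemma rank_one_SM0 : rank_one_SM 0.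
Proof. by split; [exact: SM0 | exact: rank_one_set0]. Qed.

Lemma rank_one_SMZ c X : 0 <= c -> rank_one_SM X -> rank_one_SM (c *: X).
Proof. by move=> c_ge0 [SX rX]; split; [exact: SMZ | exact: rank_one_setZ]. Qed.

Lemma slice_rank_le_sub r : slice_rank_le r `<=` slice.
Proof. by move=> X [MX [BX [pX _]]]. Qed.

Lemma mconv_slice : mconv slice `<=` slice.
Proof.
move=> _ [k [l [Y [SY [l_ge0 [l1 ->]]]]]]; split; [|split].
- move=> M MsM; rewrite inner_sum sumr_ge0 // => i _.
  by rewrite innerZ mulr_ge0 //; case: (SY i) => + _; apply.
- rewrite inner_sum -l1; apply: eq_bigr => i _.
  by rewrite innerZ; case: (SY i) => _ [-> _]; rewrite mulr1.
- apply: big_ind => [|X1 X2|i _]; [exact: psdmx0 | exact: psdmxD |].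
  by apply: psdmxZ => //; case: (SY i) => _ [_].
Qed.

Lemma pair_sums_sub : pair_sums `<=` slice_rank_le 2.
Proof.
move=> _ [a [b [[[pa Ma] ra] [[[pb Mb] rb] [Bab ->]]]]].
split; first by move=> M MsM; rewrite innerD addr_ge0 ?Ma ?Mb.
split=> //; split; first exact: psdmxD.
apply: leq_trans (mxrank_add _ _) _.
by rewrite -[2%N]/(1 + 1)%N leq_add // rank_one_set_rank.
Qed.

Lemma mconv_pair_sums_triple x y z :
  rank_one_SM x -> rank_one_SM y -> rank_one_SM z ->
  inner B y <= 0 -> inner B z = 0 -> inner B (x + y + z) = 1 ->
  mconv pair_sums (x + y + z).
Proof.
move=> Gx Gy Gz By Bz; rewrite !innerD Bz addr0 => Bxy.
set c := (inner B x)^-1.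
have Bx_gt0 : 0 < inner B x by lra.
have c_gt0 : 0 < c by rewrite invr_gt0.
have cBx : c * inner B x = 1 by rewrite mulVf // gt_eqF.
have c_le1 : c <= 1 by rewrite invf_le1 //; lra.
have -> : x + y + z = 2^-1 *: (c *: x + 2 *: z) + (1 - 2^-1) *: ((2 - c) *: x + 2 *: y).
  rewrite !scalerDr !scalerA addrACA -scalerDl.
  have -> : 2^-1 * c + (1 - 2^-1) * (2 - c) = 1 :> R by field.
  have -> : 2^-1 * 2 = 1 :> R by field.
  have -> : (1 - 2^-1) * 2 = 1 :> R by field.
  by rewrite !scale1r [z + y]addrC addrA.
apply: mconv_convex; first by apply/andP; split; lra.
- apply: mconv_sub; exists (c *: x), (2 *: z).
  split; first by apply: rank_one_SMZ; rewrite ?ltW.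
  split; first by apply: rank_one_SMZ.
  by rewrite innerD !innerZ Bz cBx mulr0 addr0.
- apply: mconv_sub; exists ((2 - c) *: x), (2 *: y).
  split; first by apply: rank_one_SMZ => //; lra.
  split; first by apply: rank_one_SMZ.
  by rewrite innerD !innerZ mulrBl cBx; split=> //; lra.
Qed.

Lemma mconv_pair_sums_sum s : (forall a, a \in s -> rank_one_SM a) ->
  inner B (\sum_(a <- s) a) = 1 -> mconv pair_sums (\sum_(a <- s) a).
Proof.
have [k] := ubnP (size s); elim: k s => // k IH s /ltnSE size_s Gs Bs.
case: (pselect (exists e, 1 < size [seq a <- s | Num.sg (inner B a) == e])%N).
  move=> [e /filter_two_perm [x [y [r [perm_s [/eqP sg_x /eqP sg_y]]]]]].
  have Gr a : a \in r -> rank_one_SM a.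
    by move=> ar; apply: Gs; rewrite (perm_mem perm_s) !inE ar !orbT.
  have Gx : rank_one_SM x by apply: Gs; rewrite (perm_mem perm_s) mem_head.
  have Gy : rank_one_SM y by apply: Gs; rewrite (perm_mem perm_s) !inE eqxx orbT.
  move: Bs; rewrite (perm_big _ perm_s) /= !big_cons addrA !innerD => Bs.
  have IHr w : rank_one_SM w -> inner B w = inner B x + inner B y ->
      mconv pair_sums (w + \sum_(a <- r) a).
    move=> Gw Bw.
    have -> : w + \sum_(a <- r) a = \sum_(a <- w :: r) a by rewrite big_cons.
    apply: IH.
    - by move: size_s; rewrite (perm_size perm_s) /=.
    - by move=> a; rewrite inE => /predU1P[->|/Gr].
    - by rewrite big_cons innerD Bw.
  have [t t01 [Bx By]] := same_sign_split (etrans sg_x (esym sg_y)).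
  have /andP[t_gt0 t_lt1] := t01; apply: (mconv_split_sum t01).
  - apply: IHr; first by apply: rank_one_SMZ Gx; rewrite invr_ge0 ltW.
    by rewrite innerZ {1}Bx mulKf // gt_eqF.
  - apply: IHr; first by apply: rank_one_SMZ Gy; rewrite invr_ge0 subr_ge0 ltW.
    by rewrite innerZ {1}By mulKf // subr_eq0 gt_eqF.
move=> /forallNP few.
have small e : (size [seq a <- s | Num.sg (inner B a) == e] <= 1)%N.
  by rewrite leqNgt; apply/negP; exact: few.
have Gclass e : rank_one_SM (\sum_(a <- [seq a <- s | Num.sg (inner B a) == e]) a).
  apply: sum_size_le1 rank_one_SM0 (small e) _ => a.
  by rewrite mem_filter => /andP[_ /Gs].
rewrite (sum_by_sign (inner B)) in Bs *.
apply: mconv_pair_sums_triple => //.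
- rewrite inner_sum big_filter; apply: sumr_le0 => a.
  by rewrite sgr_cp0 => /ltW.
- by rewrite inner_sum big_filter big1 // => a; rewrite sgr_cp0 => /eqP.
Qed.

Lemma slice_sub_mconv_pair_sums : ROG (SM Ms) -> slice `<=` mconv pair_sums.
Proof.
move=> rog X [MX [BX pX]].
have : SM Ms X by [].
rewrite rog => -[k [l [Y [GY [l_ge0 [_ XE]]]]]].
have -> : X = \sum_(a <- [seq l i *: Y i | i <- enum 'I_k]) a.
  by rewrite XE big_map big_enum.
apply: mconv_pair_sums_sum; last by rewrite big_map big_enum -XE.
by move=> _ /mapP[i _ ->]; exact: rank_one_SMZ (l_ge0 i) (GY i).
Qed.

Lemma mconv_slice_rank_le2 : ROG (SM Ms) -> mconv (slice_rank_le 2) = slice.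
Proof.
move=> rog; apply/seteqP; split.
  by move=> X /(mconv_mono (@slice_rank_le_sub 2)) /mconv_slice.
by move=> X /(slice_sub_mconv_pair_sums rog) /(mconv_mono pair_sums_sub).
Qed.

End Slice.

Section Infimum.
Variables (R : realType) (n : nat) (M0 : 'M[R]_n).
Local Notation values S := [set (inner M0 X)%:E | X in S].

Lemma ereal_inf_inner_le_mconv S X :
  mconv S X -> (ereal_inf (values S) <= (inner M0 X)%:E)%E.
Proof.
move=> [k [l [Y [SY [l_ge0 [l1 ->]]]]]].
have lb i : (ereal_inf (values S) <= (inner M0 (Y i))%:E)%E.
  by apply: ereal_inf_lbound; exists (Y i).
case E: (ereal_inf (values S)) => [r||]; last by rewrite leNye.
  rewrite lee_fin inner_sum -[r]mul1r -l1 mulr_suml.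
  apply: ler_sum => i _; rewrite innerZ ler_wpM2l //.
  by have := lb i; rewrite E lee_fin.
case: k l Y SY l_ge0 l1 lb => [|k] l Y _ _ l1 lb.
  by move: l1; rewrite big_ord0 => /eqP; rewrite eq_sym oner_eq0.
by have := lb ord0; rewrite E.
Qed.

Lemma ereal_inf_inner_sandwich S C : S `<=` C -> C `<=` mconv S ->
  ereal_inf (values C) = ereal_inf (values S).
Proof.
move=> SC CS; apply/eqP; rewrite eq_le; apply/andP; split.
  by apply: le_ereal_inf => _ [X SX <-]; exists X => //; apply: SC.
apply: le_ereal_inf_tmp => _ [X CX <-].
exact: ereal_inf_inner_le_mconv (CS _ CX).
Qed.

End Infimum.

Lemma ereal_inf_image_seq (R : realType) (T : Type) (S : set T) (g : T -> R) :
  S !=set0 -> exists u : nat -> T, (forall k, S (u k)) /\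
    ((fun k => (g (u k))%:E) @ \oo --> ereal_inf [set (g X)%:E | X in S]).
Proof.
move=> [X0 SX0].
have [|v vS v_cvg] := @ereal_inf_seq R [set (g X)%:E | X in S].
  by apply/set0P; exists (g X0)%:E, X0.
have /choice[u uP] : forall k, exists X, S X /\ (g X)%:E = v k.
  by move=> k; have [X SX <-] := vS k; exists X.
exists u; split=> [k|]; first by case: (uP k).
by rewrite (_ : (fun k => _) = v) //; apply: funext => k; case: (uP k).
Qed.

Theorem lemma5p6 (R : realType) (n : nat) (Ms : set 'M[R]_n)
  (HMs : forall M, Ms M -> symmx M)
  (Hrog : ROG (SM Ms)) :
  (forall B : 'M[R]_n, symmx B ->
     mconv [set X | (forall M, Ms M -> 0 <= inner M X) /\ inner B X = 1 /\
                   psdmx X /\ (\rank X <= 2)%N]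
     = [set X | (forall M, Ms M -> 0 <= inner M X) /\ inner B X = 1 /\ psdmx X])
  /\
  (forall (m : nat) (Mi : 'I_m -> 'M[R]_n), Ms = range Mi ->
   forall (M0 : 'M[R]_n), symmx M0 -> forall (h : (0 < n)%N),
   let feas := [set X : 'M[R]_n | psdmx X /\ (forall i, 0 <= inner (Mi i) X) /\
                                 X (Ordinal h) (Ordinal h) = 1] in
   feas !=set0 ->
   exists u : nat -> 'M[R]_n,
     (forall k, feas (u k) /\ (\rank (u k) <= 2)%N) /\
     ((fun k => (inner M0 (u k))%:E) @ \oo -->
        ereal_inf [set (inner M0 X)%:E | X in feas])).
Proof.
split=> [B _|m Mi Ms_range M0 _ h feas feas_ne]; first exact: mconv_slice_rank_le2.
pose B : 'M[R]_n := delta_mx (Ordinal h) (Ordinal h).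
have feasE : feas = slice Ms B.
  apply/seteqP; split=> X; rewrite /slice /B /= inner_delta Ms_range.
    by move=> [pX [MX X11]]; split=> [_ [i _ <-] //|]; split.
  by move=> [MX [X11 pX]]; split=> //; split=> // i; apply: MX; exists i.
have sub2 := @slice_rank_le_sub R n Ms B 2.
have mconv2 : slice Ms B `<=` mconv (slice_rank_le Ms B 2).
  by rewrite mconv_slice_rank_le2.
have [X0 feasX0] := feas_ne; rewrite feasE in feasX0.
rewrite feasE (ereal_inf_inner_sandwich M0 sub2 mconv2).
have [u [u2 u_cvg]] :=
  ereal_inf_image_seq (inner M0) (mconv_nonempty (mconv2 _ feasX0)).
exists u; split=> // k.
by have [MX [BX [pX rX]]] := u2 k.
Qed.
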